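(* Let $\boldsymbol{\sigma}\in\mathcal{G}_{\mathcal{N}|\mathcal{R}}$ be an extremal assemblage. Then every bipartite state $\rho^{AB}\in\mathcal{S}_{\boldsymbol{\sigma}}$, on $\mathcal{H}_A\otimes\mathcal{H}_B$ with $\mathcal{H}_A$ of any finite dimension, satisfies $E_{\mathrm{F}}(\rho^{AB})=S(\rho_{\boldsymbol{\sigma}})$.
   Context: Fix finite sets $\mathcal{N}$ (outcomes) and $\mathcal{R}$ (inputs) and a finite-dimensional Hilbert space $\mathcal{H}_B$. An assemblage is a tuple $\boldsymbol{\sigma}=(\sigma_{n|r})_{n\in\mathcal{N},r\in\mathcal{R}}$ of positive semidefinite operators on $\mathcal{H}_B$ such that $\rho_{\boldsymbol{\sigma}}:=\sum_{n}\sigma_{n|r}$ is independent of $r$ and has trace $1$; $\rho_{\boldsymbol{\sigma}}$ is called the marginal of $\boldsymbol{\sigma}$. The set $\mathcal{G}_{\mathcal{N}|\mathcal{R}}$ of all such assemblages is convex (convex combinations taken entrywise). An assemblage is extremal if it cannot be written as $p\boldsymbol{\sigma}^1+(1-p)\boldsymbol{\sigma}^2$ with $0<p<1$ and $\boldsymbol{\sigma}^1\neq\boldsymbol{\sigma}^2$ in $\mathcal{G}_{\mathcal{N}|\mathcal{R}}$. A state $\rho^{AB}$ on $\mathcal{H}_A\otimes\mathcal{H}_B$ ($\mathcal{H}_A$ any finite-dimensional space) realizes $\boldsymbol{\sigma}$ if for each $r\in\mathcal{R}$ there is a POVM $\{M_{n|r}\}_{n\in\mathcal{N}}$ on $\mathcal{H}_A$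 ($M_{n|r}\ge 0$, $\sum_n M_{n|r}=\mathbb{I}$) with $\sigma_{n|r}=\mathrm{Tr}_A[(M_{n|r}\otimes\mathbb{I}^B)\rho^{AB}]$ for all $n,r$; $\mathcal{S}_{\boldsymbol{\sigma}}$ is the set of all states realizing $\boldsymbol{\sigma}$. $S(\rho)=-\mathrm{Tr}(\rho\log_2\rho)$ is the von Neumann entropy. The entanglement of formation of a bipartite state is $E_{\mathrm{F}}(\rho^{AB})=\inf\{\sum_i p^i S(\mathrm{Tr}_A|\phi^i\rangle\langle\phi^i|) : \sum_i p^i|\phi^i\rangle\langle\phi^i|=\rho^{AB},\ p^i\ge 0,\ \sum_i p^i=1\}$, the infimum being over finite decompositions into pure states. *)

From HB Require Import structures.
From mathcomp Require Import all_boot all_order all_algebra.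
From mathcomp Require Import sesquilinear spectral.
From mathcomp Require Import complex.
From mathcomp Require mxtens.
From mathcomp Require Import classical_sets reals exp.

Set Implicit Arguments.
Unset Strict Implicit.
Unset Printing Implicit Defensive.

Import Order.TTheory GRing.Theory Num.Theory.
Local Open Scope ring_scope.
Local Open Scope sesquilinear_scope.

Section QDefs.
Variable R : realType.
Local Notation C := R[i].

(* Positive semidefinite operator on C^n: <v|A|v> >= 0 for every vector v
   (in the numeric order of C, i.e. real and nonnegative; this forces A
   to be Hermitian). Vectors are row vectors; <v|A|v> = v A v^*. *)
Definition psdmx n (A : 'M[C]_n) : Prop :=
  forall v : 'rV[C]_n, 0 <= (v *m A *m v ^t*) 0 0.

Definition is_state n (rho : 'M[C]_n) : Prop :=
  psdmx rho /\ \tr rho = 1.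

(* Tensor product A (x) B on C^m (x) C^p ~ C^(m*p), basis |i>|j> indexed by
   mxtens.mxtens_index (i, j). *)
Definition kron m p (A : 'M[C]_m) (B : 'M[C]_p) : 'M[C]_(m * p) :=
  mxtens.tensmx A B.

Definition ptraceA dA dB (X : 'M[C]_(dA * dB)) : 'M[C]_dB :=
  \matrix_(j, j') \sum_(i < dA)
     X (mxtens.mxtens_index (i, j)) (mxtens.mxtens_index (i, j')).

Definition xlog2x (x : R) : R := if x == 0 then 0 else x * (ln x / ln 2).

(* Von Neumann entropy S(rho) = - Tr (rho log2 rho) = - sum_k lambda_k log2 lambda_k,
   where the lambda_k are the eigenvalues (with multiplicity) of rho, given by
   the spectral decomposition rho = P^-1 diag(lambda) P of the normal matrix rho
   (library: spectral_diag). *)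
Definition vN_entropy n (rho : 'M[C]_n) : R :=
  - \sum_(k < n) xlog2x (complex.Re (spectral_diag rho 0 k)).

Definition EF dA dB (rho : 'M[C]_(dA * dB)) : R :=
  inf [set x : R | exists (k : nat) (p : 'I_k -> R) (phi : 'I_k -> 'rV[C]_(dA * dB)),
        [/\ (forall i, 0 <= p i), \sum_(i < k) p i = 1,
            (forall i, (phi i *m (phi i) ^t*) 0 0 = 1),
            \sum_(i < k) ((p i)%:C)%C *: ((phi i) ^t* *m phi i) = rho &
            x = \sum_(i < k) p i * vN_entropy (ptraceA ((phi i) ^t* *m phi i))]].

Section Assemblages.
Variables (Nn Rin : finType) (dB : nat).

Definition is_assemblage (sigma : Nn -> Rin -> 'M[C]_dB) : Prop :=
  [/\ (forall n r, psdmx (sigma n r)),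
      (forall r r', \sum_n sigma n r = \sum_n sigma n r') &
      (forall r, \tr (\sum_n sigma n r) = 1)].

(* The marginal rho_sigma = sum_n sigma n r (for any r; Rin is assumed nonempty). *)
Definition marginal (sigma : Nn -> Rin -> 'M[C]_dB) : 'M[C]_dB :=
  if [pick r : Rin] is Some r then \sum_n sigma n r else 0.

Definition extremal_assemblage (sigma : Nn -> Rin -> 'M[C]_dB) : Prop :=
  is_assemblage sigma /\
  ~ (exists (p : R) (s1 s2 : Nn -> Rin -> 'M[C]_dB),
       [/\ 0 < p < 1, is_assemblage s1, is_assemblage s2, s1 <> s2 &
           forall n r, sigma n r = (p%:C)%C *: s1 n r + ((1 - p)%:C)%C *: s2 n r]).

Definition realizes dA (sigma : Nn -> Rin -> 'M[C]_dB) (rhoAB : 'M[C]_(dA * dB)) : Prop :=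
  is_state rhoAB /\
  forall r : Rin, exists M : Nn -> 'M[C]_dA,
    [/\ (forall n, psdmx (M n)), \sum_n M n = 1%:M &
        forall n, sigma n r = ptraceA (kron (M n) 1%:M *m rhoAB)].

End Assemblages.
End QDefs.

(* Let rho^AB realize the extremal assemblage sigma through POVMs {M_(n|r)}
   and let rho^AB = sum_i p_i |phi_i><phi_i| be any decomposition into pure
   states.  Measuring each phi_i with the same POVMs gives an assemblage
   sigma^i, sigma^i_(n|r) = Tr_A[(M_(n|r) (x) I) |phi_i><phi_i|], and linearity
   of the partial trace gives sigma = sum_i p_i sigma^i.  Extremality forces
   sigma^i = sigma whenever p_i > 0; summing over the outcomes n then shows
   that the reduced state Tr_A |phi_i><phi_i| is the marginal rho_sigma.  So
   every decomposition has average entanglement S(rho_sigma); since the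
   spectral decomposition of rho^AB shows that decompositions exist, the
   infimum defining E_F is taken over the singleton {S(rho_sigma)}. *)

From HB Require Import structures.
From mathcomp Require Import all_boot all_order all_algebra.
From mathcomp Require Import sesquilinear spectral complex.
From mathcomp Require mxtens.
From mathcomp Require Import boolp classical_sets reals.
From mathcomp Require Import ring lra.

Set Implicit Arguments.
Unset Strict Implicit.
Unset Printing Implicit Defensive.

Import Order.TTheory GRing.Theory Num.Theory.
Local Open Scope ring_scope.
Local Open Scope sesquilinear_scope.

Section PartialTrace.
Variables (R : realType) (dA dB : nat).
Local Notation C := R[i].
Local Notation idx := mxtens.mxtens_index.

Lemma sum_tens (F : 'I_(dA * dB) -> C) :
  \sum_a F a = \sum_(i < dA) \sum_(j < dB) F (idx (i, j)).
Proof.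
rewrite pair_big /= (reindex (@mxtens.mxtens_index dA dB)) /=.
  by apply: eq_bigr => -[i j].
exists (@mxtens.mxtens_unindex dA dB) => x _.
  exact: mxtens.mxtens_indexK.
exact: mxtens.mxtens_unindexK.
Qed.

Lemma ptraceA_kronE (M : 'M[C]_dA) (X : 'M[C]_(dA * dB)) j j' :
  ptraceA (kron M 1%:M *m X) j j' =
  \sum_(i < dA) \sum_(k < dA) M i k * X (idx (k, j)) (idx (i, j')).
Proof.
rewrite mxE; apply: eq_bigr => i _; rewrite mxE sum_tens; apply: eq_bigr => k _.
rewrite (bigD1 j) //= big1 ?addr0; first by rewrite mxtens.tensmxE mxE eqxx mulr1.
by move=> l /negbTE nl; rewrite mxtens.tensmxE mxE eq_sym nl mulr0 mul0r.
Qed.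

Lemma ptraceA_steer_sum (Nn : finType) (M : Nn -> 'M[C]_dA) (X : 'M[C]_(dA * dB)) :
  \sum_n M n = 1%:M -> \sum_n ptraceA (kron (M n) 1%:M *m X) = ptraceA X.
Proof.
move=> sumM; apply/matrixP => j j'; rewrite summxE.
under eq_bigr do rewrite ptraceA_kronE.
rewrite [RHS]mxE exchange_big; apply: eq_bigr => i _.
rewrite exchange_big /= (bigD1 i) //= -mulr_suml -summxE sumM mxE eqxx mul1r.
rewrite big1 ?addr0 // => k nki.
by rewrite -mulr_suml -summxE sumM mxE eq_sym (negbTE nki) mul0r.
Qed.

Lemma mxtrace_ptraceA (X : 'M[C]_(dA * dB)) : \tr (ptraceA X) = \tr X.
Proof.
by rewrite /mxtrace sum_tens exchange_big; apply: eq_bigr => j _; rewrite mxE.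
Qed.

Lemma ptraceA_steer_mix k (M : 'M[C]_dA) (c : 'I_k -> C) (X : 'I_k -> 'M[C]_(dA * dB)) :
  ptraceA (kron M 1%:M *m \sum_i c i *: X i) =
  \sum_i c i *: ptraceA (kron M 1%:M *m X i).
Proof.
have mixE a b : (\sum_i c i *: X i) a b = \sum_i c i * X i a b.
  by rewrite summxE; apply: eq_bigr => ? _; rewrite mxE.
apply/matrixP => j j'; rewrite ptraceA_kronE summxE.
under [RHS]eq_bigr do rewrite mxE ptraceA_kronE mulr_sumr.
rewrite [RHS]exchange_big; apply: eq_bigr => i _.
under [RHS]eq_bigr do rewrite mulr_sumr.
rewrite [RHS]exchange_big; apply: eq_bigr => l _.
by rewrite mixE mulr_sumr; apply: eq_bigr => m _; rewrite mulrCA.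
Qed.

Definition coeffmx (phi : 'rV[C]_(dA * dB)) : 'M[C]_(dA, dB) :=
  \matrix_(i, j) phi 0 (idx (i, j)).

Lemma ptraceA_steer_pure (M : 'M[C]_dA) (phi : 'rV[C]_(dA * dB)) :
  ptraceA (kron M 1%:M *m (phi^t* *m phi)) =
  (coeffmx phi)^t* *m M^T *m coeffmx phi.
Proof.
apply/matrixP => j j'; rewrite ptraceA_kronE mxE; apply: eq_bigr => i _.
rewrite !mxE mulr_suml; apply: eq_bigr => k _.
by rewrite !mxE big_ord1 !mxE mulrCA mulrA.
Qed.

End PartialTrace.

Section Psd.
Variable R : realType.
Local Notation C := R[i].

Lemma qformE n (A : 'M[C]_n) (v : 'rV[C]_n) :
  (v *m A *m v^t*) 0 0 = \sum_b \sum_a v 0 a * A a b * (v 0 b)^*.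
Proof.
by rewrite mxE; apply: eq_bigr => b _; rewrite !mxE mulr_suml; apply: eq_bigr.
Qed.

(* Transposition preserves positivity: <u|A^T|u> = <conj u|A|conj u>. *)
Lemma psd_trmx n (A : 'M[C]_n) : psdmx A -> psdmx A^T.
Proof.
move=> psdA u; have := psdA (map_mx Num.conj u).
rewrite !qformE exchange_big /=; congr (0 <= _).
apply: eq_bigr => b _; apply: eq_bigr => a _.
by rewrite !mxE conjCK [LHS]mulrC mulrA mulrAC.
Qed.

Lemma psd_congr m n (A : 'M[C]_m) (B : 'M[C]_(m, n)) :
  psdmx A -> psdmx (B^t* *m A *m B).
Proof.
move=> psdA v; have -> : v *m (B^t* *m A *m B) *m v^t* =
    (v *m B^t*) *m A *m (v *m B^t*)^t*.
  by rewrite trmx_mul map_mxM trmxCK !mulmxA.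
exact: psdA.
Qed.

Lemma psd0 n : psdmx (0 : 'M[C]_n).
Proof. by move=> v; rewrite mulmx0 mul0mx mxE. Qed.

Lemma psd_add n (A B : 'M[C]_n) : psdmx A -> psdmx B -> psdmx (A + B).
Proof. by move=> psdA psdB v; rewrite mulmxDr mulmxDl mxE addr_ge0. Qed.

Lemma psd_scale n (A : 'M[C]_n) c : 0 <= c -> psdmx A -> psdmx (c *: A).
Proof. by move=> c0 psdA v; rewrite -scalemxAr -scalemxAl mxE mulr_ge0. Qed.

Lemma psd_sum n I (r : seq I) (P : pred I) (F : I -> 'M[C]_n) :
  (forall i, P i -> psdmx (F i)) -> psdmx (\sum_(i <- r | P i) F i).
Proof.
move=> psdF; elim/big_rec: _ => [|i X Pi psdX]; first exact: psd0.
exact: psd_add (psdF i Pi) psdX.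
Qed.

Lemma form_delta n (A : 'M[C]_n) a b :
  ((delta_mx 0 a : 'rV[C]_n) *m A *m (delta_mx 0 b : 'rV[C]_n)^t*) 0 0 = A a b.
Proof.
have -> : (delta_mx 0 b : 'rV[C]_n)^t* = delta_mx b 0.
  by apply/matrixP => x y; rewrite !mxE rmorph_nat andbC.
by rewrite -rowE -colE !mxE.
Qed.

Lemma qform_add n (A : 'M[C]_n) (u w : 'rV[C]_n) c :
  ((u + c *: w) *m A *m (u + c *: w)^t*) 0 0 =
  (u *m A *m u^t*) 0 0 + c^* * (u *m A *m w^t*) 0 0 + c * (w *m A *m u^t*) 0 0
  + c * c^* * (w *m A *m w^t*) 0 0.
Proof.
rewrite linearD /= map_mxD linearZ /= map_mxZ !mulmxDl !mulmxDr.
by rewrite -!scalemxAr -!scalemxAl !mxE; ring.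
Qed.

Lemma psd_form_real n (A : 'M[C]_n) (v : 'rV[C]_n) :
  psdmx A -> ((v *m A *m v^t*) 0 0)^* = (v *m A *m v^t*) 0 0.
Proof. by move=> psdA; apply/CrealP/ger0_real/psdA. Qed.

(* Positive semidefinite matrices are Hermitian (polarization at e_a + e_b
   and e_a + i e_b). *)
Lemma psd_herm n (A : 'M[C]_n) : psdmx A -> A^t* = A.
Proof.
move=> psdA; apply/matrixP => a b; rewrite !mxE.
pose ea : 'rV[C]_n := delta_mx 0 a; pose eb : 'rV[C]_n := delta_mx 0 b.
have Aaa := psd_form_real ea psdA; have Abb := psd_form_real eb psdA.
rewrite !form_delta in Aaa Abb.
have real_sum : (A a b)^* + (A b a)^* = A a b + A b a.
  have := psd_form_real (ea + 1 *: eb) psdA.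
  rewrite qform_add !form_delta conjC1 !mulr1 !mul1r !rmorphD /= Aaa Abb.
  by move=> E; apply: (addrI (A a a)); apply: (addIr (A b b)); rewrite !addrA.
have imag_diff : (A a b)^* - (A b a)^* = A b a - A a b.
  have := psd_form_real (ea + 'i *: eb) psdA.
  rewrite qform_add !form_delta !rmorphD !rmorphM /= ?conjCK Aaa Abb conjCi => E.
  have i_neq0 : ('i : C) != 0 := @neq0Ci _.
  apply: (mulfI i_neq0).
  transitivity ((A a a + 'i * (A a b)^* + - 'i * (A b a)^* + - 'i * 'i * A b b)
     - A a a + 'i * 'i * A b b); first by ring.
  by rewrite E; ring.
have two_neq0 : (2 : C) != 0 by rewrite pnatr_eq0.
apply: (mulfI two_neq0).
have -> : 2 * (A b a)^* = ((A a b)^* + (A b a)^*) - ((A a b)^* - (A b a)^*) by ring.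
by rewrite real_sum imag_diff; ring.
Qed.

Lemma ge0_ReE (z : C) : 0 <= z -> ((complex.Re z)%:C)%C = z /\ 0 <= complex.Re z.
Proof.
move=> z0; split; last by move: z0; rewrite lecE => /andP[].
by rewrite [RHS]complexE ger0_Im // mulr0 addr0.
Qed.

Lemma form_row n (P B : 'M[C]_n) k :
  (row k P *m B *m (row k P)^t*) 0 0 = (P *m B *m P^t*) k k.
Proof. by rewrite -(form_delta (P *m B *m P^t*)) rowE trmx_mul map_mxM !mulmxA. Qed.

Definition pure_decomposition n k (rho : 'M[C]_n) (p : 'I_k -> R)
    (phi : 'I_k -> 'rV[C]_n) : Prop :=
  [/\ (forall i, 0 <= p i), \sum_i p i = 1,
      (forall i, (phi i *m (phi i)^t*) 0 0 = 1) &
      \sum_i ((p i)%:C)%C *: ((phi i)^t* *m phi i) = rho].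

(* Spectral theorem for states: every state is a convex combination of pure
   states (its eigenvectors, weighted by its eigenvalues). *)
Lemma state_pure_decomposition n (rho : 'M[C]_n) : is_state rho ->
  exists (p : 'I_n -> R) (phi : 'I_n -> 'rV[C]_n), pure_decomposition rho p phi.
Proof.
move=> [psdr trr].
have normal_rho : rho \is normalmx by apply/normalmxP; rewrite psd_herm.
have rhoE := orthomx_spectralP normal_rho.
set P := spectralmx rho in rhoE; set d := spectral_diag rho in rhoE.
have PU : P *m P^t* = 1%:M by apply/unitarymxP/spectral_unitarymx.
rewrite invmx_unitary ?spectral_unitarymx // in rhoE.
have diagE : P *m rho *m P^t* = diag_mx d.
  by rewrite rhoE !mulmxA PU mul1mx -mulmxA PU mulmx1.
have d_ge0 k : 0 <= d 0 k.
  by have := psdr (row k P); rewrite form_row diagE mxE eqxx mulr1n.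
exists (fun k => complex.Re (d 0 k)), (fun k => row k P); split.
- by move=> k; case: (ge0_ReE (d_ge0 k)).
- apply: complexI; rewrite rmorph_sum /=.
  under eq_bigr do rewrite (proj1 (ge0_ReE (d_ge0 _))).
  by rewrite rmorph1 -mxtrace_diag -trr rhoE mxtrace_mulC mulmxA PU mul1mx.
- by move=> k; have := form_row P 1%:M k; rewrite !mulmx1 PU mxE => ->; rewrite mxE eqxx.
- apply/matrixP => a b; rewrite rhoE summxE mul_mx_diag !mxE.
  apply: eq_bigr => k _.
  by rewrite (proj1 (ge0_ReE (d_ge0 _))) !mxE big_ord1 !mxE mulrCA mulrA.
Qed.

End Psd.

Section Extremality.
Variables (R : realType) (Nn Rin : finType) (dB : nat).
Local Notation C := R[i].
Local Notation assemblage := (Nn -> Rin -> 'M[C]_dB).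

Lemma marginalE (sigma : assemblage) r :
  is_assemblage sigma -> marginal sigma = \sum_n sigma n r.
Proof.
move=> [_ same_marg _]; rewrite /marginal.
by case: pickP => [r' _ | noR]; [exact: same_marg | have := noR r].
Qed.

Lemma assemblage_convex k (P : pred 'I_k) (w : 'I_k -> R) (s : 'I_k -> assemblage) :
  (forall i, 0 <= w i) -> \sum_(i | P i) w i = 1 ->
  (forall i, is_assemblage (s i)) ->
  is_assemblage (fun n r => \sum_(i | P i) ((w i)%:C)%C *: s i n r).
Proof.
move=> w_ge0 w_sum1 sA.
have margE r : \sum_n \sum_(i | P i) ((w i)%:C)%C *: s i n r =
    \sum_(i | P i) ((w i)%:C)%C *: \sum_n s i n r.
  by rewrite exchange_big; apply: eq_bigr => i _; rewrite scaler_sumr.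
split.
- move=> n r; apply: psd_sum => i _; apply: psd_scale; first by rewrite ler0c.
  by case: (sA i).
- by move=> r r'; rewrite !margE; apply: eq_bigr => i _; case: (sA i) => _ same_marg _; rewrite (same_marg r r').
- move=> r; rewrite margE raddf_sum /=.
  have tr1 i : \tr (\sum_n s i n r) = 1 by case: (sA i).
  under eq_bigr do rewrite mxtraceZ tr1 mulr1.
  by rewrite -rmorph_sum /= w_sum1.
Qed.

Lemma extremal_split (sigma s t : assemblage) (p : R) :
  extremal_assemblage sigma -> is_assemblage s -> is_assemblage t -> 0 < p < 1 ->
  (forall n r, sigma n r = (p%:C)%C *: s n r + ((1 - p)%:C)%C *: t n r) ->
  forall n r, s n r = sigma n r.
Proof.
move=> [_ no_mix] sA tA p01 sigmaE.
case: (pselect (s = t)) => [st | st]; last by exfalso; apply: no_mix; exists p, s, t.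
move=> n r; rewrite sigmaE -st -scalerDl -rmorphD /=.
by rewrite addrC subrK scale1r.
Qed.

(* Extremality for finite mixtures: every component of positive weight equals
   sigma.  The remaining components, renormalised, form one assemblage tau with
   sigma = p_j s_j + (1 - p_j) tau. *)
Lemma extremal_mix k (sigma : assemblage) (p : 'I_k -> R) (s : 'I_k -> assemblage) :
  extremal_assemblage sigma -> (forall i, is_assemblage (s i)) ->
  (forall i, 0 <= p i) -> \sum_i p i = 1 ->
  (forall n r, sigma n r = \sum_i ((p i)%:C)%C *: s i n r) ->
  forall j, 0 < p j -> forall n r, s j n r = sigma n r.
Proof.
move=> ext sA p_ge0 p_sum1 sigmaE j pj_gt0.
have rest_ge0 : 0 <= \sum_(i | i != j) p i by apply: sumr_ge0.
have splitE : p j + \sum_(i | i != j) p i = 1 by rewrite -p_sum1 [in RHS](bigD1 j).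
have [pj1 | pj_neq1] := eqVneq (p j) 1.
  have rest0 : \sum_(i | i != j) p i = 0 by lra.
  move=> n r; rewrite sigmaE (bigD1 j) //= pj1 scale1r big1 ?addr0 // => i ij.
  by rewrite (psumr_eq0P _ rest0) ?scale0r.
have pj_lt1 : p j < 1 by rewrite lt_neqAle pj_neq1 /=; lra.
set q := 1 - p j; have q_gt0 : 0 < q by rewrite /q; lra.
have rest_q : \sum_(i | i != j) p i = q by rewrite /q; lra.
pose tau n r := \sum_(i | i != j) ((p i / q)%:C)%C *: s i n r.
have tauA : is_assemblage tau.
  apply: assemblage_convex => // [i|]; first by rewrite divr_ge0 // ltW.
  by rewrite -mulr_suml rest_q divff ?gt_eqF.
have pj01 : 0 < p j < 1 by rewrite pj_gt0 pj_lt1.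
apply: (extremal_split ext (sA j) tauA pj01).
move=> n r; rewrite sigmaE (bigD1 j) //=; congr (_ + _); rewrite scaler_sumr.
by apply: eq_bigr => i _; rewrite scalerA -rmorphM /= mulrC divfK ?gt_eqF.
Qed.

End Extremality.

Section Steering.
Variables (R : realType) (Nn Rin : finType) (dA dB : nat).
Local Notation C := R[i].
Variable M : Rin -> Nn -> 'M[C]_dA.
Hypothesis M_povm : forall r, (forall n, psdmx (M r n)) /\ \sum_n M r n = 1%:M.

Definition steered (phi : 'rV[C]_(dA * dB)) : Nn -> Rin -> 'M[C]_dB :=
  fun n r => ptraceA (kron (M r n) 1%:M *m (phi^t* *m phi)).

Lemma steered_sum phi r : \sum_n steered phi n r = ptraceA (phi^t* *m phi).
Proof. exact: ptraceA_steer_sum (proj2 (M_povm r)). Qed.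

Lemma steered_assemblage phi :
  (phi *m phi^t*) 0 0 = 1 -> is_assemblage (steered phi).
Proof.
move=> phi_unit; split.
- move=> n r; rewrite /steered ptraceA_steer_pure.
  exact/psd_congr/psd_trmx/(proj1 (M_povm r)).
- by move=> r r'; rewrite !steered_sum.
- by move=> r; rewrite steered_sum mxtrace_ptraceA mxtrace_mulC /mxtrace big_ord1.
Qed.

Variables (sigma : Nn -> Rin -> 'M[C]_dB) (rho : 'M[C]_(dA * dB)).
Hypothesis sigma_steered : forall n r, sigma n r = ptraceA (kron (M r n) 1%:M *m rho).
Hypothesis sigma_extremal : extremal_assemblage sigma.
Hypothesis Rin_nonempty : (0 < #|Rin|)%N.

(* Main step: in a pure-state decomposition of rho, every component of positive
   weight has reduced state rho_sigma, because by linearity sigma is the mixture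
   of the assemblages steered from the components. *)
Lemma pure_component_marginal k (p : 'I_k -> R) (phi : 'I_k -> 'rV[C]_(dA * dB)) :
  pure_decomposition rho p phi ->
  forall i, 0 < p i -> ptraceA ((phi i)^t* *m phi i) = marginal sigma.
Proof.
move=> [p_ge0 p_sum1 phi_unit rhoE] i pi_gt0.
have sigma_mix n r : sigma n r = \sum_j ((p j)%:C)%C *: steered (phi j) n r.
  by rewrite sigma_steered -rhoE ptraceA_steer_mix.
have component_eq := extremal_mix sigma_extremal
  (fun j => steered_assemblage (phi_unit j)) p_ge0 p_sum1 sigma_mix pi_gt0.
have [r _] := card_gt0P Rin_nonempty.
rewrite (marginalE r (proj1 sigma_extremal)) -(steered_sum _ r).
by apply: eq_bigr => n _; apply: component_eq.
Qed.

Lemma pure_decomposition_entropy k (p : 'I_k -> R) (phi : 'I_k -> 'rV[C]_(dA * dB)) :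
  pure_decomposition rho p phi ->
  \sum_i p i * vN_entropy (ptraceA ((phi i)^t* *m phi i)) = vN_entropy (marginal sigma).
Proof.
move=> dec; have [p_ge0 p_sum1 _ _] := dec.
rewrite -[RHS]mul1r -p_sum1 mulr_suml; apply: eq_bigr => i _.
have [-> | pi_neq0] := eqVneq (p i) 0; first by rewrite !mul0r.
by rewrite (pure_component_marginal dec) // lt_neqAle eq_sym pi_neq0 p_ge0.
Qed.

End Steering.

Lemma EF_constant (R : realType) dA dB (rho : 'M[R[i]]_(dA * dB)) (v : R) :
  (exists k (p : 'I_k -> R) phi, pure_decomposition rho p phi) ->
  (forall k (p : 'I_k -> R) phi, pure_decomposition rho p phi ->
     \sum_i p i * vN_entropy (ptraceA ((phi i)^t* *m phi i)) = v) ->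
  EF rho = v.
Proof.
move=> [k0 [p0 [phi0 dec0]]] avgE; rewrite /EF.
rewrite (_ : [set x : R | _]%classic = [set v]%classic) ?inf1 //.
apply/seteqP; split => x /=.
  by move=> [k [p [phi [p_ge0 p_sum1 phi_unit rhoE ->]]]]; apply: avgE.
move=> ->; have [p_ge0 p_sum1 phi_unit rhoE] := dec0.
by exists k0, p0, phi0; split => //; rewrite avgE.
Qed.

Theorem theorem1 (R : realType) (Nn Rin : finType) (dB : nat)
    (sigma : Nn -> Rin -> 'M[R[i]]_dB) :
  (0 < #|Rin|)%N ->
  extremal_assemblage sigma ->
  forall (dA : nat) (rhoAB : 'M[R[i]]_(dA * dB)),
    realizes sigma rhoAB ->
    EF rhoAB = vN_entropy (marginal sigma).
Proof.
move=> Rin_nonempty ext dA rho [rho_state realizing].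
have [M hM] := choice realizing.
have M_povm r : (forall n, psdmx (M r n)) /\ \sum_n M r n = 1%:M.
  by case: (hM r).
have sigma_steered n r : sigma n r = ptraceA (kron (M r n) 1%:M *m rho).
  by case: (hM r).
apply: EF_constant.
  have [p [phi dec]] := state_pure_decomposition rho_state.
  by exists (dA * dB)%N, p, phi.
by move=> k p phi; apply: (pure_decomposition_entropy M_povm sigma_steered ext).
Qed.
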